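(* Let $K$ be a positive integer, let $T>0$, and set $\omega_0 = \frac{2\pi}{T}$. Let $N$ be an integer and let $0\leq t_1<t_2<\cdots<t_N < T$. Define the $(N-1)\times 2K$ complex matrix $\mathbf{B}$ whose columns are indexed by $k\in\{-K,\dots,-1,1,\dots,K\}$ and whose rows are indexed by $n\in\{1,\dots,N-1\}$, with entries $$\mathbf{B}_{n,k} = e^{jk\omega_0 t_{n+1}} - e^{jk\omega_0 t_{n}} .$$ Then $\mathbf{B}$ is left-invertible (i.e., has full column rank) provided that $N \geq 2K+2$.
   Context: Here $j$ denotes the imaginary unit. *)

From HB Require Import structures.
From mathcomp Require Import all_boot all_order all_algebra.
From mathcomp Require Import reals trigo.
From mathcomp Require Import complex.
Set Implicit Arguments. Unset Strict Implicit. Unset Printing Implicit Defensive.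
Import Order.TTheory GRing.Theory Num.Theory.
Local Open Scope ring_scope.

Definition expj {R : realType} (x : R) : R[i] := Complex (cos x) (sin x).

(* Column index i : 'I_(2K) encodes the frequency k in {-K,...,-1,1,...,K}:
   i = 0,...,K-1  |->  k = i - K   (i.e. -K,...,-1)
   i = K,...,2K-1 |->  k = i - K + 1 (i.e. 1,...,K). *)
Definition freq_index (K : nat) (i : 'I_(2 * K)) : int :=
  if (i < K)%N then (i%:Z - K%:Z) else (i%:Z - K%:Z + 1).

(* The (N-1) x 2K matrix B with B_{n,k} = e^{j k w0 t_{n+1}} - e^{j k w0 t_n},
   rows n = 1..N-1 encoded as 0-based n' = n-1 : 'I_(N.-1),
   times t_1..t_N encoded 0-based as t 0, ..., t (N-1), with t : nat -> R
   (values of t at indices >= N are irrelevant). *)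
Definition Bmat {R : realType} (K N : nat) (T : R) (t : nat -> R)
  : 'M[R[i]]_(N.-1, 2 * K) :=
  \matrix_(n < N.-1, c < 2 * K)
    (expj ((freq_index c)%:~R * (2 * pi / T) * t n.+1)
     - expj ((freq_index c)%:~R * (2 * pi / T) * t n)).

From HB Require Import structures.
From mathcomp Require Import all_boot all_order all_algebra.
From mathcomp Require Import reals trigo.
From mathcomp Require Import complex.
From mathcomp Require Import zify lra.
Set Implicit Arguments. Unset Strict Implicit. Unset Printing Implicit Defensive.
Import Order.TTheory GRing.Theory Num.Theory.
Local Open Scope ring_scope.

(* Put z_n = e^{j w0 t_n}. A vector v in the kernel of B makes
   F n = sum_k v_k z_n^k independent of n, so the polynomial
   sum_k v_k X^(k+K) - F 0 X^K, of degree at most 2K, vanishes at the N > 2K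
   points z_n. These points are distinct because w0 t_n ranges increasingly
   over [0, 2 pi), hence the polynomial is zero; since the exponents k + K are
   distinct and differ from K, every v_k is zero. *)

Lemma big_option (R : Type) (idx : R) (op : R -> R -> R) (I : finType)
    (F : option I -> R) :
  \big[op/idx]_(o : option I) F o = op (F None) (\big[op/idx]_(i : I) F (Some i)).
Proof.
by rewrite [index_enum _]unlock Finite.enum.unlock big_cons big_map [index_enum _]unlock.
Qed.

Lemma monomial_sum_eq0 (F : idomainType) (I : finType) (e : I -> nat)
    (v : I -> F) (zs : seq F) :
  injective e -> uniq zs -> (forall i, e i < size zs)%N ->
  (forall z, z \in zs -> \sum_i v i * z ^+ e i = 0) -> v =1 (fun=> 0).
Proof.
move=> e_inj zs_uniq e_lt vz0.
pose p := \sum_i v i *: 'X^(e i).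
have coef_p j : p`_j = \sum_i v i * (j == e i)%:R.
  by rewrite coef_sum; apply: eq_bigr => i _; rewrite coefZ coefXn.
have p0 : p = 0.
  apply: (roots_geq_poly_eq0 _ zs_uniq).
    apply/allP => z /vz0 vz_eq0; apply/eqP; rewrite horner_sum -[RHS]vz_eq0.
    by apply: eq_bigr => i _; rewrite hornerZ hornerXn.
  apply/leq_sizeP => j le_zs_j; rewrite coef_p big1 // => i _.
  by have := e_lt i; case: eqP => [<-|_ _]; rewrite ?mulr0 // ltnNge le_zs_j.
move=> i; move/(congr1 (fun q : {poly F} => q`_(e i))): p0.
rewrite coef_p coef0 (bigD1 i) //= eqxx mulr1 big1 ?addr0 // => j ji.
by rewrite (inj_eq e_inj) eq_sym (negbTE ji) mulr0.
Qed.

Section ComplexExponential.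
Variable R : realType.
Implicit Types x y : R.

Lemma expjD x y : expj (x + y) = expj x * expj y.
Proof. by rewrite /expj cosD sinD /= [RHS]/GRing.mul /= (addrC (sin x * _)). Qed.

Lemma expj0 : expj (0 : R) = 1.
Proof. by rewrite /expj cos0 sin0. Qed.

Lemma expjMn (n : nat) x : expj (n%:R * x) = expj x ^+ n.
Proof.
elim: n => [|n IHn]; first by rewrite mul0r expj0 expr0.
by rewrite mulrS mulrDl mul1r expjD IHn exprS.
Qed.

Lemma cos_lt1 x : 0 < x < pi *+ 2 -> cos x < 1.
Proof.
move=> /andP[x_gt0 x_lt2pi].
have sin_half_gt0 : 0 < sin (x / 2).
  by apply: sin_gt0_pi; apply/andP; split; lra.
have -> : cos x = 1 - (sin (x / 2) ^+ 2) *+ 2.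
  have twice_half : (x / 2) *+ 2 = x by rewrite -mulr_natr divfK ?pnatr_eq0.
  by rewrite -[in LHS]twice_half cos_mulr2n cos2sin2; lra.
by rewrite ltrBlDr ltrDl pmulrn_lgt0 // exprn_gt0.
Qed.

Lemma expj_inj_2pi x y : 0 <= x < pi *+ 2 -> 0 <= y < pi *+ 2 ->
  expj x = expj y -> x = y.
Proof.
wlog le_xy : x y / x <= y => [hwlog|].
  by case: (lerP x y) => [/hwlog//|/ltW /hwlog h ? ? /esym/h->].
move=> /andP[x_ge0 _] /andP[_ y_lt2pi] exy.
have expj_yBx : expj (y - x) = 1.
  by rewrite expjD -exy -expjD subrr expj0.
apply/eqP; rewrite eq_le le_xy leNgt /=; apply/negP => /= lt_xy.
have cos_yBx : cos (y - x) = 1 by case: expj_yBx.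
suff : cos (y - x) < 1 by rewrite cos_yBx ltxx.
by apply: cos_lt1; apply/andP; split; lra.
Qed.

End ComplexExponential.

Section FrequencyShift.
Variable K : nat.
Implicit Types c : 'I_(2 * K).

Definition freq_shift c : nat := if (c < K)%N then nat_of_ord c else c.+1.

Lemma freq_indexE c : freq_index c = (freq_shift c)%:Z - K%:Z.
Proof. by rewrite /freq_index /freq_shift; case: ifP => _; lia. Qed.

Lemma freq_shift_inj : injective freq_shift.
Proof.
move=> c1 c2; rewrite /freq_shift => eq_shift; apply: val_inj => /=.
by move: eq_shift; do 2 case: ifP; lia.
Qed.

Lemma freq_shift_neqK c : freq_shift c != K.
Proof. by rewrite /freq_shift; case: ifP => ?; lia. Qed.

Lemma freq_shift_le c : (freq_shift c <= 2 * K)%N.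
Proof. by rewrite /freq_shift; have := ltn_ord c; case: ifP => ?; lia. Qed.

Lemma expj_freq (R : realType) c (x y : R) :
  expj ((freq_index c)%:~R * x * y) * expj (x * y) ^+ K =
  expj (x * y) ^+ freq_shift c.
Proof. by rewrite -mulrA -!expjMn -expjD -mulrDl freq_indexE intrB addrNK. Qed.

End FrequencyShift.

Section SampledExponentials.
Variables (R : realType) (K N : nat) (T : R) (t : nat -> R).

Local Notation w0 := (2 * pi / T).
Local Notation sample n c := (expj ((freq_index c)%:~R * w0 * t n)).

Lemma Bmat_kernel_const (v : 'rV[R[i]]_(2 * K)) :
  v *m (Bmat K N T t)^T = 0 ->
  forall n, (n < N)%N -> \sum_c v 0 c * sample n c = \sum_c v 0 c * sample 0 c.
Proof.
move=> vB0; pose f n := \sum_c v 0 c * sample n c.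
have f_step n : (n.+1 < N)%N -> f n.+1 = f n.
  move=> lt_n1N; have lt_n : (n < N.-1)%N.
    by rewrite -ltnS prednK // (leq_ltn_trans _ lt_n1N).
  move/rowP/(_ (Ordinal lt_n)): vB0; rewrite !mxE.
  under eq_bigr do rewrite !mxE mulrBr.
  by rewrite sumrB => /subr0_eq.
elim=> [//|n IHn] lt_n1N.
by rewrite -/(f n.+1) f_step //; exact: IHn (ltnW lt_n1N).
Qed.

Hypotheses (T_gt0 : 0 < T) (t_ge0 : forall n, (n < N)%N -> 0 <= t n)
  (t_ltT : forall n, (n < N)%N -> t n < T)
  (t_incr : forall n m, (n < m)%N -> (m < N)%N -> t n < t m).

Lemma uniq_expj_samples : uniq [seq expj (w0 * t n) | n <- iota 0 N].
Proof.
have w0_gt0 : 0 < w0 by rewrite divr_gt0 // mulr_gt0 // pi_gt0.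
have w0T : w0 * T = pi *+ 2 by rewrite divfK ?gt_eqF // mulr_natl.
have angle_in n : (n < N)%N -> 0 <= w0 * t n < pi *+ 2.
  move=> lt_nN; apply/andP; split; first by rewrite mulr_ge0 ?(ltW w0_gt0) ?t_ge0.
  by rewrite -w0T ltr_pM2l ?t_ltT.
rewrite map_inj_in_uniq ?iota_uniq // => n m; rewrite !mem_iota !add0n.
move=> /andP[_ lt_nN] /andP[_ lt_mN].
move/(expj_inj_2pi (angle_in n lt_nN) (angle_in m lt_mN)).
move/(mulfI (lt0r_neq0 w0_gt0)) => eq_t.
case: (ltngtP n m) => // [lt_nm|lt_mn].
  by have := t_incr lt_nm lt_mN; rewrite eq_t ltxx.
by have := t_incr lt_mn lt_nN; rewrite eq_t ltxx.
Qed.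

End SampledExponentials.

Theorem theorem3 (R : realType) (K N : nat) (T : R) (t : nat -> R)
  (hK : (0 < K)%N) (hT : 0 < T)
  (ht0 : forall n : nat, (n < N)%N -> 0 <= t n)
  (htT : forall n : nat, (n < N)%N -> t n < T)
  (hinc : forall n m : nat, (n < m)%N -> (m < N)%N -> t n < t m)
  (hN : (2 * K + 2 <= N)%N) :
  \rank (Bmat K N T t) = (2 * K)%N.
Proof.
rewrite -mxrank_tr; apply/eqP; rewrite -[_ == _]/(row_free _) -kermx_eq0.
apply/rowV0P => v /sub_kermxP vB0; apply/rowP => c; rewrite mxE.
pose F0 := \sum_c v 0 c * expj ((freq_index c)%:~R * (2 * pi / T) * t 0).
(* The extra index [None] carries the monomial [- F0 * X^K]. *)
pose e := oapp (@freq_shift K) K.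
have e_inj : injective e.
  case=> [c1|] [c2|] //= eq_e; first by rewrite (freq_shift_inj eq_e).
    by have := freq_shift_neqK c1; rewrite eq_e eqxx.
  by have := freq_shift_neqK c2; rewrite -eq_e eqxx.
apply: (monomial_sum_eq0 (v := oapp (v 0) (- F0)) e_inj
         (uniq_expj_samples hT ht0 htT hinc) _ _ (Some c)).
  rewrite size_map size_iota => -[c'|] /=; last by lia.
  by have := freq_shift_le c'; lia.
move=> z /mapP[n]; rewrite mem_iota add0n => /andP[_ lt_nN] ->.
rewrite big_option /= /F0 -(Bmat_kernel_const vB0 lt_nN) mulNr big_distrl addrC.
apply/eqP; rewrite subr_eq0; apply/eqP/eq_bigr => c' _.
by rewrite -[RHS]mulrA expj_freq.
Qed.
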